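(* If $H$ is a graph with $\gamma_I(H)=\gamma(H)=3$, then for any graph $G$, $\gamma_I(G\circ H)=\gamma_{(2,2,2,0)}(G)$.
   Context: All graphs are finite and simple; $N(v)$ denotes the open neighbourhood of a vertex $v$. For an integer $l\ge1$ and a vector $w=(w_0,\dots,w_l)$ of nonnegative integers with $w_0\ge 1$, a function $f:V(G)\to\{0,1,\dots,l\}$ is a $w$-dominating function on $G$ if $\sum_{u\in N(v)}f(u)\ge w_i$ for every vertex $v$ with $f(v)=i$ ($i=0,\dots,l$). The weight of $f$ is $\omega(f)=\sum_{v\in V(G)}f(v)$, and $\gamma_w(G)=\gamma_{(w_0,\dots,w_l)}(G)$ is the minimum weight of a $w$-dominating function on $G$. The Italian domination number is $\gamma_I(G)=\gamma_{(2,0,0)}(G)$, i.e., the minimum weight of $f:V(G)\to\{0,1,2\}$ with $\sum_{u\in N(v)}f(u)\ge 2$ for every $v$ with $f(v)=0$. $\gamma(H)$ is the domination number. The lexicographic product $G\circ H$ has vertex set $V(G)\times V(H)$, with $(u,v)(x,y)$ an edge iff $ux\in E(G)$, or $u=x$ and $vy\in E(H)$. *)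

From mathcomp Require Import all_boot all_order.
Set Implicit Arguments. Unset Strict Implicit. Unset Printing Implicit Defensive.

Definition simple_graph (T : finType) (e : rel T) : Prop :=
  symmetric e /\ irreflexive e.

Section Dom.
Variables (T : finType) (e : rel T).

Definition weight (l : nat) (f : {ffun T -> 'I_l}) : nat := \sum_(v : T) (f v : nat).

Definition nbsum (l : nat) (f : {ffun T -> 'I_l}) (v : T) : nat :=
  \sum_(u : T | e v u) (f u : nat).

(* w = [:: w_0; ...; w_l] (so l = size w - 1); f : V -> {0,..,l}
   is w-dominating iff every v with f v = i has neighbourhood sum >= w_i. *)
Definition w_dominating (w : seq nat) (f : {ffun T -> 'I_(size w)}) : bool :=
  [forall v, nth 0 w (f v) <= nbsum f v].

(* gamma_w(G): minimum weight of a w-dominating function.  (The default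
   value of the min, used only when no w-dominating function exists, is
   irrelevant for the vectors used below, for which one always exists.) *)
Definition gamma_w (w : seq nat) : nat :=
  \big[minn/((size w) * #|T|).+1]_(f : {ffun T -> 'I_(size w)} | w_dominating f)
     weight f.

Definition gamma_I : nat := gamma_w [:: 2; 0; 0].

Definition dominating (D : {set T}) : bool :=
  [forall v, (v \in D) || [exists u, (u \in D) && e v u]].

Definition gamma : nat := \big[minn/#|T|]_(D : {set T} | dominating D) #|D|.

End Dom.

Definition lexprod (T U : finType) (eG : rel T) (eH : rel U) : rel (T * U) :=
  fun p q => eG p.1 q.1 || ((p.1 == q.1) && eH p.2 q.2).

From mathcomp Require Import all_boot all_order.
From mathcomp Require Import zify.
Import Order.TTheory.

Set Implicit Arguments.
Unset Strict Implicit.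
Unset Printing Implicit Defensive.

(* Collapse an Italian dominating function g on G o H to the function
   u |-> min(3, sum_z g(u,z)) on G.  A fibre {u} x V(H) of weight at most
   2 < gamma(H) has a support that does not dominate H, so some (u,y) with
   g(u,y) = 0 gets no weight from inside its fibre: its two units come from
   the fibres over the G-neighbours of u, which makes the collapse
   (2,2,2,0)-dominating, of weight at most that of g.  Conversely, a
   (2,2,2,0)-dominating f on G lifts to an Italian function of the same
   weight by putting a minimum Italian function of H (of weight
   gamma_I(H) = 3) on the fibres with f(u) = 3 and the value f(u) on one
   fixed vertex of every other fibre. *)

Lemma leq_minn_sum k (I : finType) (P : pred I) (F : I -> nat) :
  minn k (\sum_(i | P i) F i) <= \sum_(i | P i) minn k (F i).
Proof.
apply: (big_ind2 (fun a b => minn k a <= b)) => [|a1 a2 b1 b2 le1 le2|i _].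
- by rewrite minn0.
- lia.
- by [].
Qed.

Section Domination.
Variables (T : finType) (e : rel T).

Lemma gamma_w_le w (f : {ffun T -> 'I_(size w)}) :
  w_dominating e f -> gamma_w e w <= weight f.
Proof.
by move=> fdom; rewrite /gamma_w -minEnat; exact: (@bigmin_le_cond _ nat).
Qed.

Lemma gamma_w_attained w : 0 < size w -> last 0 w = 0 ->
  exists2 f : {ffun T -> 'I_(size w)}, w_dominating e f & gamma_w e w = weight f.
Proof.
move=> w_gt0 w_last.
pose top : {ffun T -> 'I_(size w)} := [ffun=> Ordinal (etrans (ltn_predL _) w_gt0)].
have top_dom : w_dominating e top.
  by apply/forallP => v; rewrite ffunE /= nth_last w_last.
have weight_lt (f : {ffun T -> 'I_(size w)}) : weight f < (size w * #|T|).+1.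
  rewrite ltnS /weight; apply: (@leq_trans (\sum_(v : T) size w)).
  - by apply: leq_sum => v _; exact: ltnW.
  - by rewrite sum_nat_const mulnC.
rewrite /gamma_w -minEnat (bigmin_eq_arg _ _ _ _ top_dom) => [|f _]; last exact: ltnW.
by case: arg_minP => // f fdom _; exists f.
Qed.

Lemma gamma_le_card (D : {set T}) : dominating e D -> gamma e <= #|D|.
Proof.
by move=> Ddom; rewrite /gamma -minEnat; exact: (@bigmin_le_cond _ nat).
Qed.

Lemma italian_dominatingP (f : {ffun T -> 'I_3}) :
  reflect (forall v, f v = 0 :> nat -> 2 <= nbsum e f v)
          (w_dominating e (w := [:: 2; 0; 0]) f).
Proof.
apply: (iffP forallP) => fdom v; first by move=> fv0; have := fdom v; rewrite fv0.
by case: (f v) (fdom v) => -[|[|[|]]] //= _ /(_ erefl).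
Qed.

Lemma dominating2220P (f : {ffun T -> 'I_4}) :
  reflect (forall v, f v < 3 -> 2 <= nbsum e f v)
          (w_dominating e (w := [:: 2; 2; 2; 0]) f).
Proof.
apply: (iffP forallP) => fdom v.
  by move=> fv3; have := fdom v; case: (f v) fv3 => -[|[|[|]]].
by case: (f v) (fdom v) => -[|[|[|[|]]]] //= _ /(_ erefl).
Qed.

Lemma weight_lt_gamma_undominated l (f : {ffun T -> 'I_l}) :
  weight f < gamma e -> exists v, f v = 0 :> nat /\ nbsum e f v = 0.
Proof.
move=> f_small; pose S := [set v | f v != 0 :> nat].
have S_small : #|S| <= weight f.
  apply: (@leq_trans (\sum_(v in S) (f v : nat))).
  - by rewrite -sum1_card; apply: leq_sum => v; rewrite inE lt0n.
  - by rewrite /weight [X in _ <= X](bigID (mem S)) leq_addr.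
have /forallPn [v] : ~~ dominating e S.
  by apply: contraTN f_small => /gamma_le_card gS; rewrite -leqNgt (leq_trans gS).
rewrite negb_or inE negbK => /andP[/eqP fv0 /existsPn S_far].
exists v; split => //; apply: big1 => u vu.
by apply/eqP; move: (S_far u); rewrite vu andbT inE negbK.
Qed.

End Domination.

Section LexicographicProduct.
Variables (T U : finType) (eG : rel T) (eH : rel U).
Hypothesis irrG : irreflexive eG.

Definition fiber l (g : {ffun T * U -> 'I_l}) (u : T) : {ffun U -> 'I_l} :=
  [ffun z => g (u, z)].

Lemma weight_lexprod l (g : {ffun T * U -> 'I_l}) :
  weight g = \sum_(u : T) weight (fiber g u).
Proof. by rewrite /weight pair_bigA; apply: eq_bigr => -[u z] _; rewrite ffunE. Qed.

Lemma nbsum_lexprod l (g : {ffun T * U -> 'I_l}) u y :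
  nbsum (lexprod eG eH) g (u, y) =
  \sum_(x | eG u x) weight (fiber g x) + nbsum eH (fiber g u) y.
Proof.
rewrite /nbsum (bigID (fun p => eG u p.1)) /=; congr (_ + _).
- rewrite pair_big_dep /=; apply: eq_big => [[x z]|[x z] _]; last by rewrite ffunE.
  by rewrite /lexprod /= andbT; case: (eG u x); rewrite ?andbF.
- transitivity (\sum_(x | x == u) \sum_(z | eH y z) (g (x, z) : nat)).
    rewrite pair_big_dep; apply: eq_big => [[x z]|[x z] _] //=.
    rewrite /lexprod /=; have [->|_] := eqVneq x u; first by rewrite irrG /= andbT.
    by rewrite /= orbF andbN.
  by rewrite big_pred1_eq; apply: eq_bigr => z _; rewrite ffunE.
Qed.

Lemma gamma_I_lexprod_ge : 2 < gamma eH ->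
  gamma_w eG [:: 2; 2; 2; 0] <= gamma_I (lexprod eG eH).
Proof.
move=> gammaH; rewrite /gamma_I.
have [g /italian_dominatingP gdom ->] :=
  gamma_w_attained (lexprod eG eH) (w := [:: 2; 0; 0]) erefl erefl.
pose f : {ffun T -> 'I_4} := [ffun u => inord (minn 3 (weight (fiber g u)))].
have fE u : f u = minn 3 (weight (fiber g u)) :> nat.
  by rewrite ffunE inordK // ltnS geq_minl.
apply: (@leq_trans (weight f)).
  apply: gamma_w_le; apply/dominating2220P => u; rewrite fE gtn_min ltnn /= => small.
  have [y [gy0 y_far]] := weight_lt_gamma_undominated (leq_trans small gammaH).
  rewrite ffunE in gy0.
  have := gdom (u, y) gy0; rewrite nbsum_lexprod y_far addn0 => two.
  rewrite /nbsum (eq_bigr _ (fun x _ => fE x)).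
  by apply: (leq_trans _ (leq_minn_sum 3 _ _)); rewrite leq_min two.
rewrite weight_lexprod; apply: leq_sum => u _; by rewrite fE geq_minr.
Qed.

Section Lift.
Variables (f : {ffun T -> 'I_4}) (h : {ffun U -> 'I_3}) (y0 : U).

Definition lexprod_lift : {ffun T * U -> 'I_3} :=
  [ffun p => if f p.1 == 3 :> nat then h p.2
             else if p.2 == y0 then inord (f p.1) else ord0].

Lemma fiber_lexprod_lift3 u : f u = 3 :> nat -> fiber lexprod_lift u = h.
Proof. by move=> fu3; apply/ffunP => z; rewrite !ffunE /= fu3. Qed.

Hypothesis weight_h : weight h = 3.

Lemma weight_fiber_lexprod_lift u : weight (fiber lexprod_lift u) = f u.
Proof.
have [fu3|fu_ne3] := eqVneq (f u : nat) 3.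
  by rewrite fiber_lexprod_lift3 // weight_h fu3.
rewrite /weight (bigD1 y0) //= big1 => [|z zy0]; last first.
  by rewrite !ffunE /= (negbTE fu_ne3) (negbTE zy0).
rewrite !ffunE /= (negbTE fu_ne3) eqxx inordK ?addn0 //.
by rewrite ltn_neqAle fu_ne3 -ltnS ltn_ord.
Qed.

Lemma weight_lexprod_lift : weight lexprod_lift = weight f.
Proof.
by rewrite weight_lexprod; apply: eq_bigr => u _; exact: weight_fiber_lexprod_lift.
Qed.

Lemma lexprod_lift_italian : w_dominating eH (w := [:: 2; 0; 0]) h ->
  w_dominating eG (w := [:: 2; 2; 2; 0]) f ->
  w_dominating (lexprod eG eH) (w := [:: 2; 0; 0]) lexprod_lift.
Proof.
move=> /italian_dominatingP hdom /dominating2220P fdom.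
apply/italian_dominatingP => -[u y] lift0; rewrite nbsum_lexprod.
rewrite (eq_bigr (fun x => f x : nat)) => [|x _]; last first.
  exact: weight_fiber_lexprod_lift.
have [fu3|fu_ne3] := eqVneq (f u : nat) 3.
  rewrite fiber_lexprod_lift3 // (leq_trans _ (leq_addl _ _)) // hdom //.
  by move: lift0; rewrite ffunE /= fu3.
by rewrite (leq_trans _ (leq_addr _ _)) // fdom // ltn_neqAle fu_ne3 -ltnS ltn_ord.
Qed.

End Lift.

Lemma gamma_I_lexprod_le : gamma_I eH = 3 ->
  gamma_I (lexprod eG eH) <= gamma_w eG [:: 2; 2; 2; 0].
Proof.
move=> gammaIH.
have [h hdom weight_h] := gamma_w_attained eH (w := [:: 2; 0; 0]) erefl erefl.
have {}weight_h : weight h = 3 by rewrite -weight_h.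
have [y0 _] : exists y0 : U, true.
  case: (pickP (fun _ : U => true)) => [y0 _|U0]; first by exists y0.
  by move: weight_h; rewrite /weight big1 // => z; have := U0 z.
have [f fdom ->] := gamma_w_attained eG (w := [:: 2; 2; 2; 0]) erefl erefl.
rewrite -(weight_lexprod_lift f y0 weight_h).
exact: gamma_w_le (lexprod_lift_italian y0 weight_h hdom fdom).
Qed.

End LexicographicProduct.

Theorem theorem3 (U : finType) (eH : rel U) :
  simple_graph eH ->
  gamma_I eH = 3 -> gamma eH = 3 ->
  forall (T : finType) (eG : rel T), simple_graph eG ->
    gamma_I (lexprod eG eH) = gamma_w eG [:: 2; 2; 2; 0].
Proof.
move=> _ gammaIH gammaH T eG [_ irrG].
apply/eqP; rewrite eqn_leq gamma_I_lexprod_le //=.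
by rewrite gamma_I_lexprod_ge // gammaH.
Qed.
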